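(* Let $q > 5$ be a Sophie Germain prime, let $p = 2q+1$, and suppose $z(p) \mid \pi(q)$. Then $\pi(q)/z(p)$ is an odd integer.
   Context: A Sophie Germain prime is a prime $q$ with $2q+1$ prime. $F_n$ denotes the $n$-th Fibonacci number ($F_0=0$, $F_1=1$). For a prime $p$, $z(p)$ is the least positive integer $k$ with $p \mid F_k$. $\pi(n)$ is the Pisano period, the least period of $(F_m \bmod n)_{m\ge0}$. *)

From mathcomp Require Import all_boot.
Set Implicit Arguments. Unset Strict Implicit. Unset Printing Implicit Defensive.

Fixpoint fib_aux (n : nat) : nat * nat :=
  match n with
  | 0 => (0, 1)
  | n'.+1 => let: (a, b) := fib_aux n' in (b, a + b)
  end.
Definition fib (n : nat) : nat := (fib_aux n).1.

Definition sophie_germain (q : nat) : Prop := prime q /\ prime (2 * q + 1).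

Definition fib_period (n k : nat) : Prop :=
  forall m, fib (m + k) %% n = fib m %% n.

Definition is_entry_point (p k : nat) : Prop :=
  0 < k /\ p %| fib k /\ (forall j, 0 < j -> p %| fib j -> k <= j).

Definition is_pisano (n k : nat) : Prop :=
  0 < k /\ fib_period n k /\ (forall j, 0 < j -> fib_period n j -> k <= j).

From mathcomp Require Import all_boot all_algebra finfield.
From mathcomp Require Import ring zify.
Set Implicit Arguments. Unset Strict Implicit. Unset Printing Implicit Defensive.
Import GRing.Theory.

(* For a prime r other than 2 and 5, put M = [[F_2, F_1], [F_1, F_0]] and
   S = [[1, 2], [2, -1]] over F_r, so that 1 + S = 2M and S^2 = 5. Frobenius
   turns (1 + S)^r = 1 + S^r into 2 M^r = 1 + e S with e = 5^((r-1)/2) = +-1,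
   i.e. F_(r-e) = 0 and F_r = e in F_r.
   For r = q this makes q - 1 or 2(q + 1) a period, so pi(q) divides one of
   them. For r = p = 2q + 1, z(p) divides 2q or 2(q + 1), and in the second
   case not q + 1: otherwise F_p = F_(q+1)^2 + F_q^2 = F_q^2 = -1, while -1 is
   not a square modulo p = 3 (mod 4). Since z(p) > 4, all the mixed cases
   force z(p) | 2 or z(p) | 4, and what remains is z(p) | pi(q) | 2(q + 1)
   with z(p) not dividing q + 1, so pi(q)/z(p) is odd. *)

Lemma fibS n : fib n.+1 = (fib_aux n).2.
Proof. by rewrite /fib /=; case: (fib_aux n). Qed.

Lemma fibSS n : fib n.+2 = fib n.+1 + fib n.
Proof. by rewrite fibS /= fibS /fib; case: (fib_aux n) => a b /=; rewrite addnC. Qed.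

Lemma fibD m n : fib (m + n).+1 = fib m.+1 * fib n.+1 + fib m * fib n.
Proof.
elim: m n => [|m IHm] n; first by rewrite add0n mul1n mul0n addn0.
by rewrite addSnnS IHm !fibSS mulnDr mulnDl; lia.
Qed.

Lemma fib_period_mull n k t : fib_period n k -> fib_period n (t * k).
Proof.
move=> Pk m; elim: t => [|t IHt]; first by rewrite mul0n addn0.
by rewrite mulSn addnCA addnC Pk.
Qed.

Lemma pisano_dvd n k j : is_pisano n k -> 0 < j -> fib_period n j -> k %| j.
Proof.
move=> [k_gt0 [Pk k_min]] j_gt0 Pj.
have Pr : fib_period n (j %% k).
  move=> m; rewrite -(fib_period_mull (j %/ k) Pk (m + j %% k)).
  by rewrite -addnA (addnC (j %% k)) -divn_eq Pj.
have [/eqP //|r_gt0] := posnP (j %% k).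
by have := k_min _ r_gt0 Pr; rewrite leqNgt ltn_pmod.
Qed.

Lemma entry_point_gt4 p z : 3 < p -> is_entry_point p z -> 4 < z.
Proof.
move=> p_gt3 [z_gt0 [p_dvd _]]; rewrite ltnNge; apply/negP => z_le4.
have [fz_gt0 fz_le3] : 0 < fib z /\ fib z <= 3.
  by move: z_le4 z_gt0; case: (z) => [|[|[|[|[|]]]]].
by have := dvdn_leq fz_gt0 p_dvd; lia.
Qed.

Section FibonacciModPrime.

Variable r : nat.
Hypothesis r_prime : prime r.
Local Notation F := 'F_r.
Local Open Scope ring_scope.

Definition fibF n : F := (fib n)%:R.

Lemma fibF0 : fibF 0 = 0. Proof. by []. Qed.
Lemma fibF1 : fibF 1 = 1. Proof. by []. Qed.

Lemma fibFSS n : fibF n.+2 = fibF n.+1 + fibF n.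
Proof. by rewrite /fibF fibSS natrD. Qed.

Lemma fibFD m n : fibF (m + n).+1 = fibF m.+1 * fibF n.+1 + fibF m * fibF n.
Proof. by rewrite /fibF fibD natrD !natrM. Qed.

Lemma Fp_nat_inj_mod a b : a%:R = b%:R :> F -> (a = b %[mod r])%N.
Proof. by move/(congr1 val); rewrite /= !(val_Fp_nat r_prime). Qed.

Lemma dvdn_Fp_nat a : (r %| a)%N = (a%:R == 0 :> F).
Proof. exact: (GRing.dvdn_pcharf (pchar_Fp r_prime)). Qed.

Lemma Fp_prime_neq0 a : prime a -> a != r -> a%:R != 0 :> F.
Proof. by move=> a_prime; rewrite -dvdn_Fp_nat dvdn_prime2 // eq_sym. Qed.

Lemma Fp_exp_prime (x : F) : x ^+ r = x.
Proof. by rewrite -[in RHS](expf_card x) card_Fp. Qed.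

Lemma Fp_fermat (x : F) : x != 0 -> x ^+ r.-1 = 1.
Proof.
move=> x_neq0; apply: (mulIf x_neq0).
by rewrite mul1r -exprSr prednK ?prime_gt0 // Fp_exp_prime.
Qed.

Lemma fibF_consecutive_neq0 n : fibF n = 0 -> fibF n.+1 != 0.
Proof.
elim: n => [|n IHn] fn0; first by rewrite fibF1 oner_eq0.
apply/eqP => fn2; have fn : fibF n = 0 by move: (fibFSS n); rewrite fn0 fn2 add0r => ->.
by move: (IHn fn); rewrite fn0 eqxx.
Qed.

Lemma fibF_add_root k m : fibF k = 0 -> fibF (m + k) = fibF m * fibF k.+1.
Proof.
case: m => [|m] fk0; first by rewrite add0n fk0 fibF0 mul0r.
by rewrite addSn fibFD fk0 mulr0 addr0.
Qed.

Lemma fibF_add_mul_root k m t :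
  fibF k = 0 -> fibF (m + t * k) = fibF m * fibF k.+1 ^+ t.
Proof.
move=> fk0; elim: t => [|t IHt]; first by rewrite mul0n addn0 mulr1.
by rewrite mulSn addnCA addnC fibF_add_root // IHt exprS -mulrA (mulrC (fibF k.+1)).
Qed.

Lemma fib_period_Fp k t :
  fibF k = 0 -> fibF k.+1 ^+ t = 1 -> fib_period r (t * k).
Proof.
move=> fk0 fk1 m; apply: Fp_nat_inj_mod.
by rewrite -/(fibF (m + t * k)) -/(fibF m) fibF_add_mul_root // fk1 mulr1.
Qed.

Lemma entry_point_dvd z j : is_entry_point r z -> (r %| fib j)%N = (z %| j)%N.
Proof.
move=> [z_gt0 [r_dvd z_min]].
have fz0 : fibF z = 0 by apply/eqP; rewrite -dvdn_Fp_nat.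
have fz1 := fibF_consecutive_neq0 fz0.
rewrite dvdn_Fp_nat -/(fibF j) {1}(divn_eq j z) addnC fibF_add_mul_root //.
rewrite mulf_eq0 expf_eq0 (negbTE fz1) andbF orbF -dvdn_Fp_nat.
have [m0|m_gt0] := posnP (j %% z); first by rewrite m0 dvdn0 /dvdn m0.
have -> : (z %| j)%N = false by apply/negbTE; rewrite /dvdn -lt0n.
by apply/negbTE/negP => /(z_min _ m_gt0); rewrite leqNgt ltn_pmod.
Qed.

Lemma Fp_sqr_neq_m1 m (x : F) : r = (2 * m).+1%N -> odd m -> x ^+ 2 != -1.
Proof.
move=> r_def m_odd; apply/eqP => x2.
have two_neq0 : 2%:R != 0 :> F by apply: Fp_prime_neq0; rewrite // r_def; lia.
have x_neq0 : x != 0.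
  by apply: contra_eq_neq x2 => ->; rewrite expr0n eq_sym oppr_eq0 oner_eq0.
have := Fp_fermat x_neq0; rewrite (_ : r.-1 = 2 * m)%N ?r_def //.
rewrite exprM x2 -signr_odd m_odd expr1 => /eqP.
by rewrite eq_sym -addr_eq0 -mulr2n (negbTE two_neq0).
Qed.

Lemma prime_neq2_half : r != 2%N -> r = (r./2).*2.+1.
Proof.
by case/even_prime: r_prime => [->|r_odd] // _; rewrite -[LHS]odd_double_half r_odd.
Qed.

Definition fib_mx : 'M[F]_2 := \matrix_(i, j) fibF (2 - i - j).
Definition sqrt5_mx : 'M[F]_2 := \matrix_(i, j)
  if (i == j :> nat) then (if (i == 0 :> nat) then 1 else -1) else 2.

Lemma fib_mxSn n : fib_mx ^+ n.+1 = \matrix_(i, j) fibF (n.+2 - i - j).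
Proof.
elim: n => [|n IHn]; first by rewrite expr1.
rewrite exprSr IHn; apply/matrixP => i j; rewrite !mxE big_ord_recl big_ord1 !mxE /=.
case: i => [[|[|i]] Hi] //; case: j => [[|[|j]] Hj] //=;
  rewrite ?subn0 ?subSS ?subn0 ?fibF0 ?fibF1 ?mulr1 ?mulr0 ?addr0 ?fibFSS //.
Qed.

Lemma sqrt5_mx_sqr : sqrt5_mx ^+ 2 = (5 : F)%:M.
Proof.
apply/matrixP => i j; rewrite expr2 !mxE big_ord_recl big_ord1 !mxE /=.
by case: i => [[|[|i]] Hi] //; case: j => [[|[|j]] Hj] //=; ring.
Qed.

Lemma add1_sqrt5_mx : 1 + sqrt5_mx = (2 : F) *: fib_mx.
Proof.
apply/matrixP => i j; rewrite !mxE /=.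
by case: i => [[|[|i]] Hi] //; case: j => [[|[|j]] Hj] //=; rewrite /fibF /fib /=; ring.
Qed.

Lemma fib_mx_frobenius : r != 2%N ->
  (2 : F) *: fib_mx ^+ r = 1 + (5 : F) ^+ r./2 *: sqrt5_mx.
Proof.
move=> r_neq2.
have pchar_mx : r \in [pchar 'M[F]_2] := rmorph_pchar (@scalar_mx F 2) (pchar_Fp r_prime).
have := pFrobenius_autD_comm pchar_mx (esym (commr1 sqrt5_mx)).
rewrite !pFrobenius_autE expr1n add1_sqrt5_mx exprZn Fp_exp_prime => ->.
congr (_ + _); have -> : sqrt5_mx ^+ r = sqrt5_mx ^+ (r./2).*2.+1.
  by congr (_ ^+ _); apply: prime_neq2_half.
rewrite exprSr -muln2 mulnC exprM sqrt5_mx_sqr.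
by rewrite -rmorphXn -mulmxE mul_scalar_mx.
Qed.

Lemma Fp_five_half_sign : r != 2%N -> r != 5%N ->
  (5 : F) ^+ r./2 = 1 \/ (5 : F) ^+ r./2 = -1.
Proof.
move=> r_neq2 r_neq5; have : ((5 : F) ^+ r./2) ^+ 2 == 1.
  rewrite -exprM; have -> : (r./2 * 2 = r.-1)%N.
    by rewrite muln2 [in RHS](prime_neq2_half r_neq2).
  by rewrite Fp_fermat // (@Fp_prime_neq0 5) // eq_sym.
by rewrite sqrf_eq1 => /orP[] /eqP; [left|right].
Qed.

Lemma fibF_prime : r != 2%N -> r != 5%N ->
  (fibF r.-1 = 0 /\ fibF r = 1) \/ (fibF r.+1 = 0 /\ fibF r = -1).
Proof.
move=> r_neq2 r_neq5; have two_neq0 : 2%:R != 0 :> F by rewrite Fp_prime_neq0 // eq_sym.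
have fib_mx_r : fib_mx ^+ r = fib_mx ^+ r.-1.+1 by rewrite prednK ?prime_gt0.
have /matrixP := fib_mx_frobenius r_neq2; rewrite fib_mx_r fib_mxSn => frob.
have := frob ord0 ord_max; have := frob ord0 ord0; have := frob ord_max ord_max.
rewrite !mxE /= !subn0 !subSS !subn0 prednK ?prime_gt0 //.
by case: (Fp_five_half_sign r_neq2 r_neq5) => -> E11 E00 E01; [left|right];
  split; apply: (mulfI two_neq0); rewrite ?E01 ?E00 ?E11; ring.
Qed.

End FibonacciModPrime.

Lemma pisano_dvd_prime q k : prime q -> q != 2 -> q != 5 -> is_pisano q k ->
  k %| q.-1 \/ k %| 2 * q.+1.
Proof.
move=> q_prime q_neq2 q_neq5 Pi.
have q_gt2 : 2 < q by rewrite ltn_neqAle eq_sym q_neq2 prime_gt1.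
case: (fibF_prime q_prime q_neq2 q_neq5) => [[f0 f1]|[f0 f1]]; [left|right];
  apply: (pisano_dvd Pi); rewrite ?muln_gt0 //; try lia.
- rewrite -[q.-1]mul1n; apply: (fib_period_Fp q_prime) => //.
  by rewrite prednK ?prime_gt0 // expr1.
- by apply: (fib_period_Fp q_prime) => //; rewrite fibFSS f0 f1 add0r sqrrN expr1n.
Qed.

Lemma entry_point_dvd_pred_succ q z : prime (2 * q + 1) -> odd q -> 2 < q ->
  is_entry_point (2 * q + 1) z -> z %| 2 * q \/ (z %| 2 * q.+1 /\ ~~ (z %| q.+1)).
Proof.
set p := (2 * q + 1)%N => p_prime q_odd q_gt2 Ez.
have p_neq2 : p != 2 by rewrite /p; lia.
have p_neq5 : p != 5 by rewrite /p; lia.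
rewrite -!(entry_point_dvd p_prime _ Ez) !dvdn_Fp_nat //.
have [-> ->] : (2 * q = p.-1 /\ 2 * q.+1 = p.+1)%N by rewrite /p; lia.
case: (fibF_prime p_prime p_neq2 p_neq5) => [[fp0 _]|[fp0 fp]]; [left|right].
  exact/eqP.
split; first exact/eqP.
apply/eqP => fq1; apply/negP: (Fp_sqr_neq_m1 p_prime (fibF p q) (addn1 _) q_odd).
have fib_p : fib p = fib (q + q).+1 by rewrite /p addn1 mul2n addnn.
by rewrite -fp /fibF fib_p fibD natrD !natrM fq1 mul0r add0r expr2 eqxx.
Qed.

Lemma odd_divn_dvd_double d n m :
  0 < d -> d %| n -> n %| 2 * m -> ~~ (d %| m) -> odd (n %/ d).
Proof.
move=> d_gt0 /dvdnP[t ->] n_dvd; rewrite mulnK //; apply: contraNT => t_even.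
have /dvdnP[u t_def] : 2 %| t by rewrite dvdn2.
move: n_dvd; rewrite t_def mulnAC mulnC dvdn_pmul2l //.
exact/dvdn_trans/dvdn_mull.
Qed.

Theorem theorem6p2 (q zp piq : nat) :
  sophie_germain q -> 5 < q ->
  is_entry_point (2 * q + 1) zp -> is_pisano q piq ->
  zp %| piq -> odd (piq %/ zp).
Proof.
move=> [q_prime p_prime] q_gt5 Ez Pi z_dvd_pi.
have z_gt4 := entry_point_gt4 (ltac:(lia) : 3 < 2 * q + 1) Ez.
have q_odd : odd q by case: (even_prime q_prime) => // q2; lia.
have z_ndvd (c : nat) : 0 < c < 5 -> ~~ (zp %| c).
  by move=> /andP[c_gt0 c_lt5]; apply/negP => /(dvdn_leq c_gt0); lia.
have z_dvd_sub a b c : zp %| a -> zp %| 2 * b -> c = a - 2 * b -> zp %| c.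
  by move=> za zb ->; apply: dvdn_sub.
have [pi_dvd|pi_dvd] := pisano_dvd_prime q_prime (ltac:(lia)) (ltac:(lia)) Pi;
  have z_dvd_pi' := dvdn_trans z_dvd_pi pi_dvd;
  case: (entry_point_dvd_pred_succ p_prime q_odd (ltac:(lia)) Ez)
    => [z_dvd|[z_dvd z_ndvd_half]].
- have := z_dvd_sub _ _ 2 z_dvd (dvdn_mull 2 z_dvd_pi') (ltac:(lia)).
  by rewrite (negbTE (z_ndvd 2 _)).
- have := z_dvd_sub _ _ 4 z_dvd (dvdn_mull 2 z_dvd_pi') (ltac:(lia)).
  by rewrite (negbTE (z_ndvd 4 _)).
- have := z_dvd_sub _ q 2 z_dvd_pi' z_dvd (ltac:(lia)).
  by rewrite (negbTE (z_ndvd 2 _)).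
- by apply: (odd_divn_dvd_double _ z_dvd_pi pi_dvd z_ndvd_half); lia.
Qed.
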